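(* Let $X$ be a zero-dimensional compact metric space, $T:X\to X$ an aperiodic local homeomorphism, $N\ge1$ an integer and $m=2N$. Let $U\subseteq X$ be clopen and $V\subseteq X$ open such that: (1) the sets $T^{-2N+1}(\overline{U}),T^{-2N+2}(\overline{U}),\dots,T^{-N}(\overline{U})$ are pairwise disjoint, and $T^{-i}(T^i(U))=U$ for $i=1,\dots,N-1$; (2) the sets $T^{-2N+1}(T^N(\overline{V})),\dots,T^{-N}(T^N(\overline{V}))$ are pairwise disjoint; (3) there is $\eta>0$ such that for every $x\in\overline{V}$, every $y\in B(x,\eta)$ and every $1\le i\le N-1$, $T^{-i}(T^{i+N}(\{y\}))=\{T^N(y)\}$. Then there is a clopen set $W\subseteq X$ with $U\subseteq W$, $V\subseteq\bigcup_{0\le i\le m-1}T^{-i}(W)$, $T^{-i}(T^i(W))=W$ for $i=1,\dots,N-1$, and such that the sets $T^{-2N+1}(\overline{W}),\dots,T^{-N}(\overline{W})$ are pairwise disjoint.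
   Context: $X$ zero-dimensional: every point has a base of clopen neighbourhoods. Aperiodic: no $x$ with $T^n(x)=x$ for some $n\ge1$. For $j\ge0$, $T^{-j}(A)$ is the preimage of $A$ under $T^j$. $B(x,\eta)$ is the open ball. *)

From HB Require Import structures.
From mathcomp Require Import all_boot all_order all_algebra.
From mathcomp Require Import all_classical all_reals all_analysis.
Set Implicit Arguments. Unset Strict Implicit. Unset Printing Implicit Defensive.
Import Order.TTheory GRing.Theory Num.Theory.
Local Open Scope classical_set_scope.
Local Open Scope ring_scope.

Definition clopen_base_space (T : topologicalType) : Prop :=
  forall (x : T) (A : set T), nbhs x A ->
    exists B : set T, clopen B /\ B x /\ B `<=` A.

Definition aperiodic (T : Type) (f : T -> T) : Prop :=
  forall (n : nat) (x : T), (0 < n)%N -> iter n f x <> x.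

(* local homeomorphism: continuous, and every point has an open neighbourhood
   O on which f is injective and open (i.e. f restricted to O is a
   homeomorphism onto the open set f(O)). *)
Definition local_homeomorphism (T : topologicalType) (f : T -> T) : Prop :=
  continuous f /\
  forall x : T, exists O : set T,
    [/\ open O, O x,
        (forall y z, O y -> O z -> f y = f z -> y = z) &
        (forall A : set T, open A -> A `<=` O -> open (f @` A))].

From HB Require Import structures.
From mathcomp Require Import all_boot all_order all_algebra.
From mathcomp Require Import all_classical all_reals all_analysis.
From mathcomp Require Import zify.

Set Implicit Arguments.
Unset Strict Implicit.
Unset Printing Implicit Defensive.
Import Order.TTheory GRing.Theory Num.Theory.
Local Open Scope classical_set_scope.
Local Open Scope ring_scope.

(* W is U together with a clopen neighbourhood C of T^N(closure V) from which
   every point within N steps (forwards or backwards) of U has been removed.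
   Every x in V then has T^N x in C, giving the covering. Choosing C inside
   T^N of the eta-neighbourhood of closure V makes each point of C the only
   point of its T^i-fibre, giving saturation. Disjointness on [N, 2N-1]
   reduces, for the points of C, to the fact that a point of T^N(X) in C does
   not come back to C within N - 1 steps; by hypothesis (2) T^N(closure V)
   has this property, and zero-dimensionality and compactness let it spread
   to a clopen neighbourhood. *)

(* [compact_cover] is only available in pointed spaces, so a nonempty space is
   pointed at one of its points. *)
Definition pointed_at (X : topologicalType) (x0 : X) : Type := X.
HB.instance Definition _ (X : topologicalType) (x0 : X) :=
  Topological.copy (pointed_at x0) X.
HB.instance Definition _ (X : topologicalType) (x0 : X) :=
  isPointed.Build (pointed_at x0) x0.

Lemma clopen_separation (X : topologicalType) (K O : set X) :
  clopen_base_space X -> compact K -> open O -> K `<=` O ->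
  exists C, [/\ clopen C, K `<=` C & C `<=` O].
Proof.
move=> zeroX cK oO KO.
have [[x0 _]|K0] := pselect (exists x, K x); last first.
  by exists set0; split; [exact: clopen0| move=> x Kx; apply: K0; exists x|].
pose D := [set B : set (pointed_at x0) | clopen B /\ B `<=` O].
have : @compact (pointed_at x0) K := cK.
rewrite compact_cover => /(_ _ D id).
case=> [B [[]]//|x Kx|D' D'D KD'].
- have [B [cB [Bx BO]]] := zeroX x O (open_nbhs_nbhs (conj oO (KO x Kx))).
  by exists B.
set C := cover _ id in KD'; exists C; split => //.
- split; first by apply: bigcup_open => B /D'D/set_mem [[]].
  apply: closed_bigcup => [|B /D'D/set_mem [[]]] //; exact: finite_fset.
- by move=> x [B /D'D/set_mem [_ BO] /BO].
Qed.

Lemma open_map_local_homeomorphism (X : topologicalType) (f : X -> X) :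
  local_homeomorphism f -> forall A, open A -> open (f @` A).
Proof.
move=> [_ lh] A oA; pose O x := projT1 (cid (lh x)).
have -> : f @` A = \bigcup_(x in A) f @` (A `&` O x).
  apply/seteqP; split => [_ [x Ax <-]|_ [x _ [z [Az _] <-]]]; last by exists z.
  by exists x => //; exists x => //; split => //; rewrite /O; case: cid => ? [].
apply: bigcup_open => x _; rewrite /O; case: cid => Ox /= [oOx _ _ fopen].
by apply: fopen; [exact: openI | exact: subIsetr].
Qed.

Lemma open_map_iter (X : topologicalType) (f : X -> X) n :
  (forall A, open A -> open (f @` A)) ->
  forall A, open A -> open (iter n f @` A).
Proof.
move=> fopen; elim: n => [|n IHn] A oA /=; first by rewrite image_id.
by rewrite -(image_comp (iter n f) f); exact/fopen/IHn.
Qed.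

Lemma continuous_iter (X : topologicalType) (f : X -> X) n :
  continuous f -> continuous (iter n f).
Proof.
move=> cf; elim: n => [|n IHn] /= x; first exact: cvg_id.
exact: (continuous_comp (IHn x) (cf _)).
Qed.

Lemma closed_image_compact (X Y : topologicalType) (f : X -> Y) (K : set X) :
  compact [set: X] -> hausdorff_space Y -> continuous f -> closed K ->
  closed (f @` K).
Proof.
move=> cX hY cf clK; apply: compact_closed => //.
apply: continuous_compact; first exact: continuous_subspaceT.
exact: subclosed_compact clK cX (@subsetT _ K).
Qed.

Definition no_early_return (X : Type) (f : X -> X) (n : nat) (Y C : set X) :=
  forall k, (0 < k < n)%N -> Y `&` C `&` iter k f @^-1` C = set0.

Section NoEarlyReturnNbhd.
Variables (X : topologicalType) (f : X -> X) (n : nat) (Y A O : set X).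
Hypotheses (zeroX : clopen_base_space X) (cX : compact [set: X])
  (hX : hausdorff_space X) (cf : continuous f).
Hypotheses (clY : closed Y) (clA : closed A) (oO : open O) (AO : A `<=` O).
Hypothesis noretA : no_early_return f n Y A.

Let returns := [set k | (0 < k < n)%N].

Let finite_returns : finite_set returns.
Proof. by apply: sub_finite_set (finite_II n) => k /andP[]. Qed.

Let compactA : compact A.
Proof. exact: subclosed_compact clA cX (@subsetT _ A). Qed.

(* First shrink a clopen neighbourhood C1 of A so that no point of Y in C1
   lands in A before time n, then cut C1 down by a clopen neighbourhood of A
   avoiding the early images of Y `&` C1. *)
Lemma clopen_no_early_return_nbhd :
  exists C, [/\ clopen C, A `<=` C, C `<=` O & no_early_return f n Y C].
Proof.
pose F := \bigcup_(k in returns) (Y `&` iter k f @^-1` A).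
have clF : closed F.
  apply: closed_bigcup => // k _; apply: closedI => //.
  by move: (continuous_iter (n:=k) cf) => /continuous_closedP; apply.
have AF : A `<=` O `&` ~` F.
  move=> a Aa; split; first exact: AO.
  move=> [k kn [Ya Aka]]; have := noretA kn.
  by move=> /seteqP[/(_ a) + _]; apply.
have [C1 [cC1 AC1 C1F]] := clopen_separation zeroX compactA
  (openI oO (closed_openC clF)) AF.
pose H := \bigcup_(k in returns) (iter k f @` (Y `&` C1)).
have clH : closed H.
  apply: closed_bigcup => // k _; apply: closed_image_compact => //.
    exact: continuous_iter.
  by apply: closedI => //; case: cC1.
have AH : A `<=` ~` H.
  move=> a Aa [k kn [y [Yy C1y] yka]].
  by have [_] := C1F y C1y; apply; exists k => //; split => //=; rewrite yka.
have [C2 [cC2 AC2 C2H]] := clopen_separation zeroX compactA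
  (closed_openC clH) AH.
exists (C1 `&` C2); split.
- exact: clopenI.
- by move=> a Aa; split; [exact: AC1|exact: AC2].
- by move=> c [/C1F[]].
- move=> k kn; apply/seteqP; split => // y [[Yy [C1y _]] [_ C2ky]].
  by apply: (C2H _ C2ky); exists k => //; exists y.
Qed.

End NoEarlyReturnNbhd.

Lemma no_early_return_range (X : Type) (f : X -> X) n (B : set X) :
  (forall k, (0 < k < n)%N ->
     iter n f @^-1` B `&` iter (k + n) f @^-1` B = set0) ->
  no_early_return f n (range (iter n f)) B.
Proof.
move=> disjB k kn; apply/seteqP; split => // _ [[[z _ <-] Bz] Bkz].
by have /seteqP[/(_ z) + _] := disjB k kn; apply; split => //=; rewrite iterD.
Qed.

Definition orbit_window (X : Type) (f : X -> X) (n : nat) (U : set X) :=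
  \bigcup_(d in `I_n) (iter d f @^-1` U `|` iter d f @` U).

Lemma clopen_orbit_window (X : topologicalType) (f : X -> X) n (U : set X) :
  compact [set: X] -> hausdorff_space X -> continuous f ->
  (forall A, open A -> open (f @` A)) -> clopen U ->
  clopen (orbit_window f n U).
Proof.
move=> cX hX cf fopen [oU clU]; split.
  apply: bigcup_open => d _; apply: openU; last exact: open_map_iter.
  by move: (continuous_iter (n:=d) cf) => /continuousP; apply.
apply: closed_bigcup => [|d _]; first exact: finite_II.
apply: closedU.
  by move: (continuous_iter (n:=d) cf) => /continuous_closedP; apply.
by apply: closed_image_compact => //; exact: continuous_iter.
Qed.

Section ExtendClopen.
Variables (X : Type) (T : X -> X) (N : nat) (U C : set X).
Hypothesis saturatedU : forall i, (1 <= i)%N -> (i <= N - 1)%N ->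
  iter i T @^-1` (iter i T @` U) = U.

Definition extend_clopen := U `|` (C `\` orbit_window T N U).

Lemma extend_clopen_cover : (0 < N)%N ->
  iter N T @^-1` C `<=`
    \bigcup_(i in [set i : nat | (i < 2 * N)%N]) iter i T @^-1` extend_clopen.
Proof.
move=> N_gt0 x CNx.
have [windowNx|] := pselect (orbit_window T N U (iter N T x)); last first.
  by move=> notwindow; exists N => /=; [lia | right].
case: windowNx => d /= dN [Udx|[u Uu udx]].
  by exists (d + N)%N => /=; [lia | left; rewrite iterD].
case: d dN udx => [|d] dN udx.
  by exists N => /=; [lia | left; rewrite -udx].
have Nsplit : iter d.+1 T (iter (N - d.+1) T x) = iter N T x.
  by rewrite -iterD subnKC //; lia.
exists (N - d.+1)%N => /=; first lia.
left; rewrite -(saturatedU (i := d.+1)) //; last lia.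
by exists u => //; rewrite udx Nsplit.
Qed.

Lemma extend_clopen_saturated i : (1 <= i)%N -> (i <= N - 1)%N ->
  (forall c, C c -> iter i T @^-1` (iter i T @` [set c]) = [set c]) ->
  iter i T @^-1` (iter i T @` extend_clopen) = extend_clopen.
Proof.
move=> i1 iN injC; apply/seteqP; split => [z [w Ww wz]|z Wz]; last by exists z.
case: Ww => [Uw|[Cw notwindow]].
  by left; rewrite -(saturatedU i1 iN); exists w.
have -> : z = w by have /seteqP[/(_ z) -> //] := injC w Cw; exists w.
by right.
Qed.

Lemma extend_clopen_disjoint :
  no_early_return T N (range (iter N T)) C ->
  (forall i j, (N <= i)%N -> (i < j)%N -> (j <= 2 * N - 1)%N ->
     iter i T @^-1` U `&` iter j T @^-1` U = set0) ->
  forall i j, (N <= i)%N -> (i < j)%N -> (j <= 2 * N - 1)%N ->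
    iter i T @^-1` extend_clopen `&` iter j T @^-1` extend_clopen = set0.
Proof.
move=> noretC disjU i j Ni ij jN; apply/seteqP; split => // z [/= Wiz Wjz].
have Tjz : iter j T z = iter (j - i) T (iter i T z).
  by rewrite -iterD subnK 1?ltnW.
have window_ji : (j - i < N)%N by lia.
move: Wjz; rewrite Tjz.
case: Wiz => [Uiz|[Ciz notwindow_iz]] [Ujz|[Cjz notwindow_jz]].
- have /seteqP[/(_ z) + _] := disjU i j Ni ij jN.
  by apply; split => //=; rewrite Tjz.
- by apply: notwindow_jz; exists (j - i)%N => //; right; exists (iter i T z).
- by apply: notwindow_iz; exists (j - i)%N => //; left.
- have Yiz : range (iter N T) (iter i T z).
    by exists (iter (i - N) T z) => //; rewrite -iterD subnKC.
  have /seteqP[/(_ (iter i T z)) + _] := noretC (j - i)%N ltac:(lia).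
  by apply; split.
Qed.

End ExtendClopen.

Lemma clopen_extend_clopen (X : topologicalType) (T : X -> X) N (U C : set X) :
  compact [set: X] -> hausdorff_space X -> continuous T ->
  (forall A, open A -> open (T @` A)) -> clopen U -> clopen C ->
  clopen (extend_clopen T N U C).
Proof.
move=> cX hX cT Topen clU clC.
rewrite /extend_clopen setDE; apply: clopenU => //; apply: clopenI => //.
by apply: clopenC => //; exact: clopen_orbit_window.
Qed.

Theorem lemma4p6 (R : realType) (X : metricType R) (T : X -> X)
  (N : nat) (U V : set X) :
  clopen_base_space X -> compact [set: X] ->
  local_homeomorphism T -> aperiodic T -> (1 <= N)%N ->
  clopen U -> open V ->
  (forall i j, (N <= i)%N -> (i < j)%N -> (j <= 2 * N - 1)%N ->
     iter i T @^-1` closure U `&` iter j T @^-1` closure U = set0) ->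
  (forall i, (1 <= i)%N -> (i <= N - 1)%N ->
     iter i T @^-1` (iter i T @` U) = U) ->
  (forall i j, (N <= i)%N -> (i < j)%N -> (j <= 2 * N - 1)%N ->
     iter i T @^-1` (iter N T @` closure V)
       `&` iter j T @^-1` (iter N T @` closure V) = set0) ->
  (exists eta : R, 0 < eta /\
     forall x y i, closure V x -> ball x eta y -> (1 <= i)%N -> (i <= N - 1)%N ->
       iter i T @^-1` (iter (i + N) T @` [set y]) = [set iter N T y]) ->
  exists W : set X,
    [/\ clopen W, U `<=` W,
        V `<=` \bigcup_(i in [set i : nat | (i < 2 * N)%N]) iter i T @^-1` W,
        (forall i, (1 <= i)%N -> (i <= N - 1)%N ->
           iter i T @^-1` (iter i T @` W) = W) &
        (forall i j, (N <= i)%N -> (i < j)%N -> (j <= 2 * N - 1)%N ->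
           iter i T @^-1` closure W `&` iter j T @^-1` closure W = set0)].
Proof.
move=> zeroX cX lhT _ N_gt0 clopen_U oV disjU saturatedU disjV.
move=> [eta [eta_gt0 injV]].
have hX : hausdorff_space X := @metric_hausdorff R X.
have [cT _] := lhT; have Topen := open_map_local_homeomorphism lhT.
have closedTN K : closed K -> closed (iter N T @` K).
  by move=> clK; apply: closed_image_compact => //; exact: continuous_iter.
pose A := iter N T @` closure V.
pose O := iter N T @` \bigcup_(x in closure V) (ball x eta)°.
have AO : A `<=` O.
  by move=> _ [x Vx <-]; exists x => //; exists x => //; exact: nbhsx_ballx.
have noretA : no_early_return T N (range (iter N T)) A.
  by apply: no_early_return_range => k /andP[k_gt0 kN]; apply: disjV => //; lia.
have oO : open O.
  apply: open_map_iter => //.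
  by apply: bigcup_open => x _; exact: open_interior.
have [C [clopen_C AC CO noretC]] := clopen_no_early_return_nbhd zeroX cX hX cT
  (closedTN _ closedT) (closedTN _ (@closed_closure _ V)) oO AO noretA.
have clopenW : clopen (extend_clopen T N U C) by exact: clopen_extend_clopen.
have closure_clopen (B : set X) : clopen B -> closure B = B.
  by move=> [_ /closure_id <-].
exists (extend_clopen T N U C); split => //.
- by move=> x; left.
- move=> x Vx; apply: extend_clopen_cover => //.
  by apply: AC; exists x => //; exact: subset_closure.
- move=> i i1 iN; apply: extend_clopen_saturated => // _ /CO [y [x Vx bxy] <-].
  rewrite image_set1 -iterD -(image_set1 (iter (i + N) T)).
  exact: injV Vx (interior_subset bxy) i1 iN.
- rewrite closure_clopen //; apply: extend_clopen_disjoint => //.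
  by rewrite -(closure_clopen U clopen_U).
Qed.
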